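(* Let $\mathcal{C}$ be a finite prevariety over a finite alphabet $A$ with canonical $\mathcal{C}$-morphism $\eta_{\mathcal{C}}:A^*\to N_{\mathcal{C}}$, and let $\rho:2^{A^*}\to R$ be a nice multiplicative rating map. Then the set $\mathcal{P}=\{(t,r)\in N_{\mathcal{C}}\times R \mid r\in \mathcal{I}_{\mathit{SF}(\mathcal{C})}[\eta_{\mathcal{C}}^{-1}(t),\rho]\}$ is the least subset of $N_{\mathcal{C}}\times R$ that is $\mathit{SF}$-saturated for $\eta_{\mathcal{C}}$ and $\rho$.
   Context: Fix a finite alphabet $A$. A lattice is a class of languages containing $\emptyset,A^*$ and closed under union and intersection. A prevariety is a lattice of regular languages closed under complement and under quotients $u^{-1}L=\{w\mid uw\in L\}$, $Lu^{-1}=\{w\mid wu\in L\}$. $\mathit{SF}(\mathcal{C})$ is the least class containing $\mathcal{C}$ and all $\{a\}$ ($a\in A$), closed under union, complement and concatenation. A $\mathcal{C}$-morphism is a surjective monoid morphism $\eta:A^*\to N$ onto a finite monoid such that every language $\eta^{-1}(F)$, $F\subseteq N$, belongs to $\mathcal{C}$. When $\mathcal{C}$ is a finite prevariety, there is a $\mathcal{C}$-morphism $\eta_{\mathcal{C}}:A^*\to N_{\mathcal{C}}$ recognizing every language of $\mathcal{C}$, unique up to isomorphism: the canonical $\mathcal{C}$-morphism. A rating algebra is a finite commutative idempotent monoid $(R,+)$ with neutral element $0_R$, ordered by $r\le s$ iff $r+s=s$. A rating map is a map $\rho:2^{A^*}\to R$ with $\rho(\emptyset)=0_R$ and $\rho(K_1\cup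 K_2)=\rho(K_1)+\rho(K_2)$. It is nice if for every $K\subseteq A^*$ there is a finite $F\subseteq K$ with $\rho(K)=\rho(F)$. It is multiplicative if $R$ carries a multiplication making $(R,+,\cdot)$ an idempotent semiring (with $0_R$ absorbing and multiplication distributing over $+$) and $\rho(\{\varepsilon\})=1_R$, $\rho(K_1K_2)=\rho(K_1)\rho(K_2)$. Write $\rho(w)$ for $\rho(\{w\})$. For $r\in R$, $\omega$ is a positive integer such that $r^\omega$ is multiplicatively idempotent for all $r\in R$. A cover of $L$ is a finite set $\mathbf{K}$ of languages with $L\subseteq\bigcup\mathbf{K}$; it is a $\mathcal{D}$-cover if all members are in $\mathcal{D}$. Its $\rho$-imprint is $\{r\in R\mid \exists K\in\mathbf{K},\ r\le\rho(K)\}$. For a lattice $\mathcal{D}$ there exists a $\mathcal{D}$-cover of $L$ whose $\rho$-imprint is included in the $\rho$-imprint of every $\mathcal{D}$-cover of $L$; this imprint is denoted $\mathcal{I}_{\mathcal{D}}[L,\rho]$. For a morphism $\eta:A^*\to N$ into a finite monoid and a multiplicative rating map $\rho:2^{A^*}\to R$, a set $S\subseteq N\times R$ is $\mathit{SF}$-saturated for $\eta$ and $\rho$ if: (1) $(\eta(w),\rho(w))\in S$ for every $w\in A^*$; (2) if $(t,r)\in S$ and $q\le r$ then $(t,q)\in S$; (3) if $(s,q),(t,r)\in S$ then $(st,qr)\in S$; (4) if $(e,r)\in S$ and $e$ is idempotent in $N$, then $(e,r^\omega+r^{\omega+1})\in S$. *)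

From Stdlib Require List.
From mathcomp Require Import all_boot.
Set Implicit Arguments. Unset Strict Implicit. Unset Printing Implicit Defensive.

Definition lang (A : Type) := seq A -> Prop.

Definition lempty {A} : lang A := fun _ => False.
Definition lfull {A} : lang A := fun _ => True.
Definition lunion {A} (K L : lang A) : lang A := fun w => K w \/ L w.
Definition linter {A} (K L : lang A) : lang A := fun w => K w /\ L w.
Definition lcompl {A} (L : lang A) : lang A := fun w => ~ L w.
Definition lconcat {A} (K L : lang A) : lang A :=
  fun w => exists u v, w = u ++ v /\ K u /\ L v.
Definition lletter {A} (a : A) : lang A := fun w => w = [:: a].
Definition lword {A} (u : seq A) : lang A := fun w => w = u.
Definition lquot_l {A} (u : seq A) (L : lang A) : lang A := fun w => L (u ++ w).
Definition lquot_r {A} (u : seq A) (L : lang A) : lang A := fun w => L (w ++ u).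
Definition lfin {A : eqType} (s : seq (seq A)) : lang A := fun w => w \in s.
Definition lsubset {A} (K L : lang A) : Prop := forall w, K w -> L w.

Definition regular {A : finType} (L : lang A) : Prop :=
  exists (Q : finType) (delta : Q -> A -> Q) (q0 : Q) (F : {set Q}),
    forall w, L w <-> foldl delta q0 w \in F.

Definition lattice {A} (D : lang A -> Prop) : Prop :=
  [/\ D lempty, D lfull,
      (forall K L, D K -> D L -> D (lunion K L)) &
      (forall K L, D K -> D L -> D (linter K L))].

Definition prevariety {A : finType} (C : lang A -> Prop) : Prop :=
  [/\ lattice C, (forall L, C L -> regular L),
      (forall L, C L -> C (lcompl L)),
      (forall u L, C L -> C (lquot_l u L)) &
      (forall u L, C L -> C (lquot_r u L))].

Definition finite_class {A} (C : lang A -> Prop) : Prop :=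
  exists s : seq (lang A), forall L, C L <-> List.In L s.

Inductive SF {A} (C : lang A -> Prop) : lang A -> Prop :=
| SF_base L : C L -> SF C L
| SF_letter a : SF C (lletter a)
| SF_union K L : SF C K -> SF C L -> SF C (lunion K L)
| SF_compl L : SF C L -> SF C (lcompl L)
| SF_concat K L : SF C K -> SF C L -> SF C (lconcat K L).

Definition is_monoid {N} (mul : N -> N -> N) (one : N) : Prop :=
  [/\ associative mul, left_id one mul & right_id one mul].

Definition preimage_lang {A} {N : finType} (eta : seq A -> N) (F : {set N}) : lang A :=
  fun w => eta w \in F.

Definition C_morphism {A} {N : finType} (C : lang A -> Prop)
    (mul : N -> N -> N) (one : N) (eta : seq A -> N) : Prop :=
  [/\ is_monoid mul one,
      eta [::] = one /\ (forall u v, eta (u ++ v) = mul (eta u) (eta v)),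
      (forall x, exists w, eta w = x) &
      (forall F : {set N}, C (preimage_lang eta F))].

(** canonical C-morphism: a C-morphism recognizing every language of C
    (unique up to isomorphism when C is a finite prevariety). *)
Definition canonical_C_morphism {A} {N : finType} (C : lang A -> Prop)
    (mul : N -> N -> N) (one : N) (eta : seq A -> N) : Prop :=
  C_morphism C mul one eta /\
  (forall L, C L -> exists F : {set N}, L = preimage_lang eta F).

Definition idem_semiring {R} (add : R -> R -> R) (zero : R)
    (mul : R -> R -> R) (one : R) : Prop :=
  [/\ [/\ associative add, commutative add, (forall r, add r r = r) & left_id zero add],
      [/\ associative mul, left_id one mul & right_id one mul],
      left_zero zero mul /\ right_zero zero mul &
      left_distributive mul add /\ right_distributive mul add].

Definition rle {R} (add : R -> R -> R) (r s : R) : Prop := add r s = s.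

Definition rating_map {A} {R} (add : R -> R -> R) (zero : R) (rho : lang A -> R) : Prop :=
  rho lempty = zero /\ (forall K L, rho (lunion K L) = add (rho K) (rho L)).

Definition nice {A : eqType} {R} (rho : lang A -> R) : Prop :=
  forall K, exists s : seq (seq A), lsubset (lfin s) K /\ rho K = rho (lfin s).

Definition multiplicative_rating {A} {R} (add : R -> R -> R) (zero : R)
    (mul : R -> R -> R) (one : R) (rho : lang A -> R) : Prop :=
  [/\ idem_semiring add zero mul one, rating_map add zero rho,
      rho (lword [::]) = one &
      (forall K L, rho (lconcat K L) = mul (rho K) (rho L))].

Definition rpow {R} (mul : R -> R -> R) (one : R) (r : R) (n : nat) : R :=
  iter n (mul r) one.

Definition is_omega {R} (mul : R -> R -> R) (one : R) (omega : nat) : Prop :=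
  0 < omega /\
  (forall r, mul (rpow mul one r omega) (rpow mul one r omega) = rpow mul one r omega).

Definition cover_of {A} (D : lang A -> Prop) (L : lang A) (Ks : seq (lang A)) : Prop :=
  lsubset L (fun w => exists K, List.In K Ks /\ K w) /\
  (forall K, List.In K Ks -> D K).

Definition imprint {A} {R} (add : R -> R -> R) (rho : lang A -> R)
    (Ks : seq (lang A)) (r : R) : Prop :=
  exists K, List.In K Ks /\ rle add r (rho K).

Definition optimal_cover {A} {R} (D : lang A -> Prop) (L : lang A)
    (add : R -> R -> R) (rho : lang A -> R) (Ks : seq (lang A)) : Prop :=
  cover_of D L Ks /\
  (forall Ks', cover_of D L Ks' -> forall r, imprint add rho Ks r -> imprint add rho Ks' r).

(** I_D[L, rho]: the rho-imprint of an optimal D-cover of L *)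
Definition opt_imprint {A} {R} (D : lang A -> Prop) (L : lang A)
    (add : R -> R -> R) (rho : lang A -> R) (r : R) : Prop :=
  exists Ks, optimal_cover D L add rho Ks /\ imprint add rho Ks r.

Definition SF_saturated {A} {N R : Type} (mulN : N -> N -> N) (eta : seq A -> N)
    (add : R -> R -> R) (mul : R -> R -> R) (one : R) (omega : nat)
    (rho : lang A -> R) (S : N -> R -> Prop) : Prop :=
  [/\ (forall w, S (eta w) (rho (lword w))),
      (forall t r q, S t r -> rle add q r -> S t q),
      (forall s q t r, S s q -> S t r -> S (mulN s t) (mul q r)) &
      (forall e r, mulN e e = e -> S e r ->
         S e (add (rpow mul one r omega) (rpow mul one r omega.+1)))].

(* Soundness: every language of SF(C) is closed under the rank-k
   Ehrenfeucht-Fraisse equivalence for some k, whose rank-0 level is equality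
   under eta.  The classes of this equivalence are stable under concatenation
   and, for eta-idempotent words, under taking long enough powers, so every
   pair (t, r) of the least saturated set is, at every rank, below the rating
   of one class inside eta^-1(t); hence r lies in the imprint of every
   SF(C)-cover of eta^-1(t).
   Completeness: for any saturated set S, covers of B^* witnessing S are built
   by induction on |N| + |R| and on |B|.  When all letters of B evaluate to
   units, one language per value of eta suffices, rated by the product of the
   1 + v over the loop values v.  Otherwise pick a letter c of B whose image is
   not a unit: words are cut at the occurrences of c, the blocks between them
   are covered using B \ c, and sequences of blocks are covered inductively
   over the local divisors of N and R at the images of c, which are smaller. *)

From mathcomp Require Import all_boot zify boolp.
Set Implicit Arguments. Unset Strict Implicit. Unset Printing Implicit Defensive.

Lemma lang_ext {A} (K L : lang A) : (forall w, K w <-> L w) -> K = L.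
Proof. by move=> KL; apply: funext => w; apply: propext. Qed.

Section SFClosure.
Variables (A : Type) (C : lang A -> Prop).

Lemma SF_equiv K L : SF C K -> (forall w, K w <-> L w) -> SF C L.
Proof. by move=> SFK /lang_ext <-. Qed.

Lemma SF_inter K L : SF C K -> SF C L -> SF C (linter K L).
Proof.
move=> SFK SFL; apply: (SF_equiv (SF_compl (SF_union (SF_compl SFK) (SF_compl SFL)))).
move=> w; rewrite /lcompl /lunion /linter; split; last by case=> Kw Lw [].
by move=> /not_orP [/contrapT Kw /contrapT Lw].
Qed.

Lemma SF_subclass (C' : lang A -> Prop) L :
  (forall K, C K -> C' K) -> SF C L -> SF C' L.
Proof.
move=> CC'; elim=> *;
  [apply: SF_base; exact: CC' | exact: SF_letter | exact: SF_union
  | exact: SF_compl | exact: SF_concat]; by [].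
Qed.
End SFClosure.

Definition wprod {T X : Type} (mul : X -> X -> X) (one : X) (f : T -> X) (w : seq T) : X :=
  foldr (fun a acc => mul (f a) acc) one w.

Definition is_unit {M : Type} (mul : M -> M -> M) (one : M) (x : M) :=
  exists y, mul x y = one /\ mul y x = one.

Lemma wprod_cons {T X : Type} (mul : X -> X -> X) one (f : T -> X) a w :
  wprod mul one f (a :: w) = mul (f a) (wprod mul one f w).
Proof. by []. Qed.

Section Monoid.
Variables (M : Type) (mul : M -> M -> M) (one : M).
Hypothesis Hm : is_monoid mul one.

Lemma wprod_cat {T : Type} (f : T -> M) u v :
  wprod mul one f (u ++ v) = mul (wprod mul one f u) (wprod mul one f v).
Proof.
case: Hm => mulA mul1m _; elim: u => [|a u IH] /=; first by rewrite mul1m.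
by rewrite IH mulA.
Qed.

Lemma rpowS r n : rpow mul one r n.+1 = mul r (rpow mul one r n).
Proof. by []. Qed.

Lemma rpowD r m n : rpow mul one r (m + n) = mul (rpow mul one r m) (rpow mul one r n).
Proof.
case: Hm => mulA mul1m _; elim: m => [|m IH]; first by rewrite /= mul1m.
by rewrite addSn !rpowS IH mulA.
Qed.

Lemma rpowSr r n : rpow mul one r n.+1 = mul (rpow mul one r n) r.
Proof. by case: Hm => _ _ mulm1; rewrite -addn1 rpowD /= mulm1. Qed.

Lemma rpowM r m n : rpow mul one r (m * n) = rpow mul one (rpow mul one r m) n.
Proof. elim: n => [|n IH]; first by rewrite muln0. by rewrite mulnS rpowD IH. Qed.

Lemma rpow1 n : rpow mul one one n = one.
Proof. by case: Hm => _ mul1m _; elim: n => //= n ->; rewrite mul1m. Qed.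

Lemma rpow_idem r n : mul r r = r -> 0 < n -> rpow mul one r n = r.
Proof.
case: Hm => _ _ mulm1 rr; case: n => // n _; elim: n => [|n IH]; first by rewrite /= mulm1.
by rewrite rpowS IH rr.
Qed.

Lemma unit_one : is_unit mul one one.
Proof. by case: Hm => _ mul1m _; exists one; rewrite mul1m. Qed.

Lemma unit_mul x y : is_unit mul one x -> is_unit mul one y -> is_unit mul one (mul x y).
Proof.
case: Hm => mulA mul1m _ [x' [xx' x'x]] [y' [yy' y'y]]; exists (mul y' x'); split.
- by rewrite -mulA (mulA y) yy' mul1m xx'.
- by rewrite -mulA (mulA x') x'x mul1m y'y.
Qed.

Lemma unit_rpow x n : is_unit mul one x -> is_unit mul one (rpow mul one x n).
Proof. by move=> Ux; elim: n => [|n IH]; [exact: unit_one | exact: unit_mul]. Qed.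

Lemma unit_mulr_eq x a : is_unit mul one x -> mul x a = x -> a = one.
Proof. by case: Hm => mulA mul1m _ [x' [_ x'x]] xa; rewrite -(mul1m a) -x'x -mulA xa. Qed.

Lemma unit_idem e : is_unit mul one e -> mul e e = e -> e = one.
Proof. by move=> Ue ee; apply: (unit_mulr_eq Ue); rewrite ee. Qed.

Lemma unit_rpow_omega om x : is_omega mul one om -> is_unit mul one x -> rpow mul one x om = one.
Proof. by case=> _ om_idem Ux; apply: unit_idem (unit_rpow om Ux) (om_idem x). Qed.

Lemma unit_rpow_one_at_period x i j : is_unit mul one x -> i < j ->
  rpow mul one x i = rpow mul one x j -> rpow mul one x (j - i) = one.
Proof.
move=> Ux ij; rewrite -{1}(subnKC (ltnW ij)) rpowD => E.
by apply: (unit_mulr_eq (unit_rpow i Ux)); rewrite -E.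
Qed.
End Monoid.

Lemma unit_period (M : finType) (mul : M -> M -> M) (one : M) x :
  is_monoid mul one -> is_unit mul one x -> exists2 k, 0 < k & rpow mul one x k = one.
Proof.
move=> Hm Ux; pose f (i : 'I_#|M|.+1) := rpow mul one x i.
have : ~ injective f by move/leq_card; rewrite card_ord ltnn.
move=> /existsNP [i /existsNP [j /not_implyP [fij ij]]].
case: (ltngtP i j) => [lt_ij|lt_ji|/val_inj //].
- by exists (j - i); [rewrite subn_gt0 | exact: unit_rpow_one_at_period].
- by exists (i - j); [rewrite subn_gt0 | exact: (unit_rpow_one_at_period Hm Ux lt_ji)].
Qed.

Lemma unit_common_period (M : finType) (M' : Type) (mul : M -> M -> M) (one : M)
    (mul' : M' -> M' -> M') (one' : M') om x y :
  is_monoid mul one -> is_monoid mul' one' -> is_omega mul' one' om ->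
  is_unit mul one x -> is_unit mul' one' y ->
  exists2 k, 0 < k & rpow mul one x k = one /\ rpow mul' one' y k = one'.
Proof.
move=> Hm Hm' Hom Ux Uy; have [k k_gt0 xk] := unit_period Hm Ux.
exists (k * om); first by case: Hom => om_gt0 _; rewrite muln_gt0 k_gt0.
rewrite (rpowM Hm) xk (rpow1 Hm) mulnC (rpowM Hm').
by rewrite (unit_rpow_omega Hm' Hom Uy) (rpow1 Hm').
Qed.

Section IdemSemiring.
Variables (R : Type) (add : R -> R -> R) (zero : R) (mul : R -> R -> R) (one : R).
Hypothesis HR : idem_semiring add zero mul one.

Lemma idem_semiring_monoid : is_monoid mul one.
Proof. by case: HR. Qed.

Lemma rle_refl r : rle add r r.
Proof. by case: HR => [[_ _ addrr _]] _ _ _; exact: addrr. Qed.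

Lemma rle_trans a b c : rle add a b -> rle add b c -> rle add a c.
Proof. by case: HR => [[addA _ _ _]] _ _ _; rewrite /rle => ab bc; rewrite -bc addA ab. Qed.

Lemma rle_addl a b : rle add a (add a b).
Proof. by case: HR => [[addA _ addrr _]] _ _ _; rewrite /rle addA addrr. Qed.

Lemma rle_addr a b : rle add b (add a b).
Proof. by case: HR => [[addA addC addrr _]] _ _ _; rewrite /rle addC -addA addrr. Qed.

Lemma rle_lub a b z : rle add a z -> rle add b z -> rle add (add a b) z.
Proof. by case: HR => [[addA _ _ _]] _ _ _; rewrite /rle => az bz; rewrite -addA bz az. Qed.

Lemma rle0 a : rle add zero a.
Proof. by case: HR => [[_ _ _ add0r]] _ _ _; rewrite /rle add0r. Qed.

Lemma rle_mull c a b : rle add a b -> rle add (mul c a) (mul c b).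
Proof. by case: HR => _ _ _ [_ mulDr]; rewrite /rle => ab; rewrite -mulDr ab. Qed.

Lemma rle_mulr c a b : rle add a b -> rle add (mul a c) (mul b c).
Proof. by case: HR => _ _ _ [mulDl _]; rewrite /rle => ab; rewrite -mulDl ab. Qed.

Lemma rle_mul a b a' b' : rle add a a' -> rle add b b' -> rle add (mul a b) (mul a' b').
Proof. by move=> aa' bb'; apply: (rle_trans (rle_mull a bb')); exact: rle_mulr. Qed.

Lemma rle_rpow a b n : rle add a b -> rle add (rpow mul one a n) (rpow mul one b n).
Proof. by move=> ab; elim: n => [|n IH]; [exact: rle_refl | exact: rle_mul]. Qed.
End IdemSemiring.

Lemma cat_eq_cat_cons {A : Type} (x u p q : seq A) a : x ++ u = p ++ a :: q ->
  (exists x2, x = p ++ a :: x2 /\ q = x2 ++ u) \/ (exists p', p = x ++ p' /\ u = p' ++ a :: q).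
Proof.
elim: x p => [|b x IH] p /=; first by move=> ->; right; exists p.
case: p => [|c p] /=.
- by case=> -> <-; left; exists x.
- by case=> -> /IH [[x2 [-> ->]]|[p' [-> ->]]]; [left; exists x2 | right; exists p'].
Qed.

Definition wpow {A : Type} (u : seq A) n := flatten (nseq n u).

Lemma wpowS {A : Type} (u : seq A) n : wpow u n.+1 = u ++ wpow u n.
Proof. by []. Qed.

Lemma wpowD {A : Type} (u : seq A) m n : wpow u (m + n) = wpow u m ++ wpow u n.
Proof. by elim: m => [|m IH] //=; rewrite addSn wpowS IH catA. Qed.

Lemma wpow_cons_split {A : Type} (u : seq A) n p a q : wpow u n = p ++ a :: q ->
  exists i u1 u2, [/\ i < n, u = u1 ++ a :: u2, p = wpow u i ++ u1 & q = u2 ++ wpow u (n - i.+1)].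
Proof.
elim: n p => [|n IH] p; first by case: p.
rewrite wpowS => E; case: (cat_eq_cat_cons E) => [[u2 [-> ->]]|[p' [-> /IH]]].
- by exists 0, p, u2; rewrite subSS subn0.
- by case=> i [u1 [u2 [lt_in -> -> ->]]]; exists i.+1, u1, u2; rewrite wpowS catA.
Qed.

Lemma wprod_wpow {T X : Type} (mul : X -> X -> X) one (f : T -> X) u n :
  is_monoid mul one -> wprod mul one f (wpow u n) = rpow mul one (wprod mul one f u) n.
Proof. by move=> Hm; elim: n => [|n IH] //; rewrite wpowS wprod_cat // IH. Qed.

(** * Ehrenfeucht-Fraisse equivalence *)

Section EFGame.
Variables (A N : Type) (mulN : N -> N -> N) (eta : seq A -> N).
Hypothesis etaM : forall u v, eta (u ++ v) = mulN (eta u) (eta v).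

Fixpoint ef_eq (k : nat) (u v : seq A) : Prop :=
  if k is k'.+1 then
    [/\ ef_eq k' u v,
       (forall u1 a u2, u = u1 ++ a :: u2 ->
          exists v1 v2, v = v1 ++ a :: v2 /\ ef_eq k' u1 v1 /\ ef_eq k' u2 v2) &
       (forall v1 a v2, v = v1 ++ a :: v2 ->
          exists u1 u2, u = u1 ++ a :: u2 /\ ef_eq k' u1 v1 /\ ef_eq k' u2 v2)]
  else eta u = eta v.

Definition ef_forth k u v := forall u1 a u2, u = u1 ++ a :: u2 ->
  exists v1 v2, v = v1 ++ a :: v2 /\ ef_eq k u1 v1 /\ ef_eq k u2 v2.

Lemma ef_eq_refl k u : ef_eq k u u.
Proof.
elim: k u => [|k IH] u //=; split=> // u1 a u2 ->; by exists u1, u2.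
Qed.

Lemma ef_eq_sym k u v : ef_eq k u v -> ef_eq k v u.
Proof.
elim: k u v => [|k IH] u v //= [uv forth back]; split; first exact: IH.
- by move=> v1 a v2 /back [u1 [u2 [-> [? ?]]]]; exists u1, u2; split=> //; split; exact: IH.
- by move=> u1 a u2 /forth [v1 [v2 [-> [? ?]]]]; exists v1, v2; split=> //; split; exact: IH.
Qed.

Lemma ef_eqSI k u v : ef_eq k u v -> ef_forth k u v -> ef_forth k v u -> ef_eq k.+1 u v.
Proof.
move=> uv forth back; split=> // v1 a v2 /back [u1 [u2 [-> [? ?]]]].
by exists u1, u2; split=> //; split; exact: ef_eq_sym.
Qed.

Lemma ef_eq_trans k u v w : ef_eq k u v -> ef_eq k v w -> ef_eq k u w.
Proof.
elim: k u v w => [|k IH] u v w /=; first by move=> -> ->.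
case=> uv forth_uv back_uv [vw forth_vw back_vw]; split; first exact: IH uv vw.
- move=> u1 a u2 /forth_uv [v1 [v2 [/forth_vw [w1 [w2 [-> [vw1 vw2]]]] [uv1 uv2]]]].
  by exists w1, w2; split=> //; split; [exact: IH uv1 vw1 | exact: IH uv2 vw2].
- move=> w1 a w2 /back_vw [v1 [v2 [/back_uv [u1 [u2 [-> [uv1 uv2]]]] [vw1 vw2]]]].
  by exists u1, u2; split=> //; split; [exact: IH uv1 vw1 | exact: IH uv2 vw2].
Qed.

Lemma ef_eq_le j k u v : j <= k -> ef_eq k u v -> ef_eq j u v.
Proof. by move=> /subnK <-; elim: (k - j) => [|d IH] //= [/IH]. Qed.

Lemma ef_eq_catl k x u v : ef_eq k u v -> ef_eq k (x ++ u) (x ++ v).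
Proof.
elim: k x u v => [|k IH] x u v /=; first by rewrite !etaM => ->.
have forth u' v' : ef_eq k.+1 u' v' -> ef_forth k (x ++ u') (x ++ v').
  move=> [uv forth_uv _] p a q E.
  case: (cat_eq_cat_cons E) => [[x2 [-> ->]]|[p' [-> /forth_uv]]].
  - exists p, (x2 ++ v'); split; first by rewrite -catA.
    by split; [exact: ef_eq_refl | exact: IH].
  - case=> v1 [v2 [-> [uv1 uv2]]]; exists (x ++ v1), v2; split; first by rewrite catA.
    by split; first exact: IH.
move=> uv; apply: ef_eqSI; [case: uv => /IH // | exact: forth | exact/forth/ef_eq_sym].
Qed.

Lemma ef_eq_catr k y u v : ef_eq k u v -> ef_eq k (u ++ y) (v ++ y).
Proof.
elim: k y u v => [|k IH] y u v /=; first by rewrite !etaM => ->.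
have forth u' v' : ef_eq k.+1 u' v' -> ef_forth k (u' ++ y) (v' ++ y).
  move=> [uv forth_uv _] p a q E.
  case: (cat_eq_cat_cons E) => [[u2 [/forth_uv]]|[y1 [-> ->]]].
  - case=> v1 [v2 [-> [uv1 uv2]]] ->; exists v1, (v2 ++ y); split; first by rewrite -catA.
    by split; last exact: IH.
  - exists (v' ++ y1), q; split; first by rewrite -catA.
    by split; [exact: IH | exact: ef_eq_refl].
move=> uv; apply: ef_eqSI; [case: uv => /IH // | exact: forth | exact/forth/ef_eq_sym].
Qed.

Lemma ef_eq_cat k u v u' v' : ef_eq k u v -> ef_eq k u' v' -> ef_eq k (u ++ u') (v ++ v').
Proof. by move=> uv uv'; apply: (ef_eq_trans (ef_eq_catr u' uv)); exact: ef_eq_catl. Qed.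

Definition ef_closed k (L : lang A) := forall u v, ef_eq k u v -> L u -> L v.

Lemma ef_closed_le j k L : j <= k -> ef_closed j L -> ef_closed k L.
Proof. by move=> jk cL u v /(ef_eq_le jk); exact: cL. Qed.

Lemma ef_eq1_nil v : ef_eq 1 [::] v -> v = [::].
Proof. by case: v => // b v [_ _ /(_ [::] b v erefl) [[|? ?] [? []]]]. Qed.

Lemma ef_closed_letter a : ef_closed 2 (lletter a).
Proof.
move=> u v uv; rewrite /lletter => Eu; subst u.
case: uv => _ /(_ [::] a [::] erefl) [v1 [v2 [-> [e1 e2]]]] _.
by rewrite (ef_eq1_nil e1) (ef_eq1_nil e2).
Qed.

Lemma ef_closed_concat k K L :
  ef_closed k K -> ef_closed k L -> ef_closed k.+1 (lconcat K L).
Proof.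
move=> cK cL u v uv [p [[|a q] [Eu [Kp Lq]]]].
- rewrite cats0 in Eu; subst p; exists v, [::]; rewrite cats0; split=> //; split=> //.
  exact: cK (ef_eq_le (leqnSn k) uv) Kp.
- case: uv => _ /(_ p a q Eu) [v1 [v2 [-> [pv1 qv2]]]] _.
  exists v1, (a :: v2); split=> //; split; first exact: cK Kp.
  exact: cL (ef_eq_catl [:: a] qv2) Lq.
Qed.

Lemma SF_ef_closed (C : lang A -> Prop) :
  (forall L, C L -> ef_closed 0 L) -> forall L, SF C L -> exists k, ef_closed k L.
Proof.
move=> C0 L; elim=> {L} [L CL | a | K L _ [k1 cK] _ [k2 cL] | L _ [k cL]
                          | K L _ [k1 cK] _ [k2 cL]].
- by exists 0; exact: C0.
- by exists 2; exact: ef_closed_letter.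
- exists (maxn k1 k2) => u v uv [Ku|Lu].
  + by left; apply: (ef_closed_le (leq_maxl k1 k2) cK uv).
  + by right; apply: (ef_closed_le (leq_maxr k1 k2) cL uv).
- by exists k => u v uv Lu Lv; apply: Lu; exact: cL (ef_eq_sym uv) Lv.
- exists (maxn k1 k2).+1; apply: ef_closed_concat.
  + exact: ef_closed_le (leq_maxl k1 k2) cK.
  + exact: ef_closed_le (leq_maxr k1 k2) cL.
Qed.

Lemma eta_wpow u n : mulN (eta u) (eta u) = eta u -> 0 < n -> eta (wpow u n) = eta u.
Proof.
move=> uu; case: n => // n _; elim: n => [|n IH]; first by rewrite /wpow /= cats0.
by rewrite wpowS etaM IH uu.
Qed.

Fixpoint ef_bound k := if k is k'.+1 then (ef_bound k').*2.+1 else 1.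

Lemma ef_bound_gt0 k : 0 < ef_bound k.
Proof. by case: k. Qed.

(* A cut in copy i of u^n is answered in u^m by a copy keeping both sides
   either equal or at least ef_bound k long. *)
Lemma ef_forth_wpow k u n m :
  (forall n m, ef_bound k <= n -> ef_bound k <= m -> ef_eq k (wpow u n) (wpow u m)) ->
  ef_bound k.+1 <= n -> ef_bound k.+1 <= m -> ef_forth k (wpow u n) (wpow u m).
Proof.
move=> low /= bn bm p a q E.
case: (wpow_cons_split E) => i [u1 [u2 [lt_in Eu -> ->]]].
pose j := if i < ef_bound k then i
          else if n - i.+1 < ef_bound k then m - (n - i) else ef_bound k.
have lt_jm : j < m by rewrite /j; case: ifP => ?; [|case: ifP => ?]; lia.
have left_eq : ef_eq k (wpow u i) (wpow u j).
  rewrite /j; case: ifP => ?; first exact: ef_eq_refl.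
  by apply: low; [lia | case: ifP => ?; lia].
have right_eq : ef_eq k (wpow u (n - i.+1)) (wpow u (m - j.+1)).
  rewrite /j; case: ifP => ?; first by apply: low; lia.
  case: ifP => ?; last by apply: low; lia.
  have -> : m - (m - (n - i)).+1 = n - i.+1 by lia.
  exact: ef_eq_refl.
exists (wpow u j ++ u1), (u2 ++ wpow u (m - j.+1)); split; last first.
  by split; [exact: ef_eq_catr | exact: ef_eq_catl].
have {1}-> : m = j + (1 + (m - j.+1)) by lia.
by rewrite !wpowD /wpow /= cats0 -/(wpow u _) Eu -!catA.
Qed.

Lemma ef_eq_wpow k u n m : mulN (eta u) (eta u) = eta u ->
  ef_bound k <= n -> ef_bound k <= m -> ef_eq k (wpow u n) (wpow u m).
Proof.
move=> uu; elim: k n m => [|k IH] n m bn bm; first by rewrite /= !eta_wpow.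
have bk : ef_bound k <= ef_bound k.+1 by rewrite /= -addnn; lia.
by apply: ef_eqSI; [apply: IH; lia | exact: ef_forth_wpow | exact: ef_forth_wpow].
Qed.
End EFGame.

(** * Local divisors *)

Section LocalDivisor.
Variables (M : finType) (mul : M -> M -> M) (one : M).
Hypothesis Hm : is_monoid mul one.
Variable c : M.

(* The local divisor of M at c lives on cM \cap Mc, with (z, c x) |-> z x as
   product and c as unit. *)
Definition ld_mem (z : M) : bool := [exists x, z == mul c x] && [exists y, z == mul y c].
Definition ld : finType := {z : M | ld_mem z}.

Lemma ld_meml (z : ld) : exists x, val z = mul c x.
Proof. by case: z => z /= /andP [/existsP [x /eqP ->] _]; exists x. Qed.

Lemma ld_memr (z : ld) : exists y, val z = mul y c.
Proof. by case: z => z /= /andP [_ /existsP [y /eqP ->]]; exists y. Qed.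

Lemma ld_memI z x y : z = mul c x -> z = mul y c -> ld_mem z.
Proof. by move=> zx zy; apply/andP; split; apply/existsP; [exists x | exists y]; exact/eqP. Qed.

Lemma ld_mem_sandwich x : ld_mem (mul c (mul x c)).
Proof. by case: Hm => mulA _ _; apply: (@ld_memI _ (mul x c) (mul c x)); rewrite ?mulA. Qed.

Lemma ld_factor_ex (z : ld) : exists x, val z == mul c x.
Proof. by case/andP: (valP z) => /existsP. Qed.

Definition ld_factor (z : ld) : M := xchoose (ld_factor_ex z).

Lemma ld_factorP z : val z = mul c (ld_factor z).
Proof. exact/eqP/(xchooseP (ld_factor_ex z)). Qed.

Lemma ld_mul_proof (z z' : ld) : ld_mem (mul (val z) (ld_factor z')).
Proof.
case: Hm => mulA _ _; case: (ld_meml z) => x zx; case: (ld_memr z) => y zy.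
case: (ld_memr z') => y' z'y'.
apply: (@ld_memI _ (mul x (ld_factor z')) (mul y y')); first by rewrite zx mulA.
by rewrite {1}zy -mulA -ld_factorP z'y' mulA.
Qed.

Definition ld_mul (z z' : ld) : ld := Sub (mul (val z) (ld_factor z')) (ld_mul_proof z z').

Lemma ld_one_proof : ld_mem c.
Proof. by case: Hm => _ mul1m mulm1; apply: (@ld_memI _ one one); rewrite ?mul1m ?mulm1. Qed.

Definition ld_one : ld := Sub c ld_one_proof.

Lemma ld_mul_vall (z z' : ld) x : val z = mul x c -> val (ld_mul z z') = mul x (val z').
Proof. by case: Hm => mulA _ _ zx; rewrite /= zx -mulA -ld_factorP. Qed.

Lemma ld_mul_valr (z z' : ld) y : val z' = mul c y -> val (ld_mul z z') = mul (val z) y.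
Proof.
case: Hm => mulA _ _ z'y; case: (ld_memr z) => x zx.
by rewrite (ld_mul_vall _ zx) z'y zx mulA.
Qed.

Lemma ld_monoid : is_monoid ld_mul ld_one.
Proof.
case: (Hm) => mulA mul1m mulm1; split.
- move=> z1 z2 z3; apply: val_inj.
  case: (ld_memr z1) => x1 z1x1; case: (ld_memr z2) => x2 z2x2.
  have z12 : val (ld_mul z1 z2) = mul (mul x1 x2) c by rewrite (ld_mul_vall _ z1x1) z2x2 mulA.
  by rewrite (ld_mul_vall _ z1x1) (ld_mul_vall _ z2x2) (ld_mul_vall _ z12) mulA.
- by move=> z; apply: val_inj; rewrite (@ld_mul_vall _ _ one) //= mul1m.
- by move=> z; apply: val_inj; rewrite (@ld_mul_valr _ _ one) //= mulm1.
Qed.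

Lemma ld_card_le : #|ld| <= #|M|.
Proof. by rewrite card_sig max_card. Qed.

Lemma ld_card_lt : ~ is_unit mul one c -> #|ld| < #|M|.
Proof.
case: (Hm) => mulA mul1m mulm1 nUc; rewrite card_sig.
rewrite -(cardC [pred x | ld_mem x]) -{1}(addn0 #|_|) ltn_add2l.
apply/card_gt0P; exists one; rewrite inE /=.
apply/negP => /andP [/existsP [x /eqP cx] /existsP [y /eqP yc]].
have xy : x = y by rewrite -(mulm1 y) cx mulA -yc mul1m.
by apply: nUc; exists x; split; [rewrite -cx | rewrite xy -yc].
Qed.

Lemma ld_rpow (z : ld) a n : val z = mul c a ->
  val (rpow ld_mul ld_one z n) = mul c (rpow mul one a n).
Proof.
case: (Hm) => mulA _ mulm1 za; elim: n => [|n IH]; first by rewrite /= mulm1.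
by rewrite rpowS (ld_mul_valr _ IH) za -mulA.
Qed.
End LocalDivisor.

Section LocalDivisorSemiring.
Variables (R : finType) (add : R -> R -> R) (zero : R) (mul : R -> R -> R) (one : R).
Hypothesis HR : idem_semiring add zero mul one.
Variable c : R.

Let Hm := idem_semiring_monoid HR.

Lemma ld_add_proof (z z' : ld mul c) : ld_mem mul c (add (val z) (val z')).
Proof.
case: HR => _ _ _ [mulDl mulDr].
case: (ld_meml z) => x zx; case: (ld_memr z) => y zy.
case: (ld_meml z') => x' z'x'; case: (ld_memr z') => y' z'y'.
apply: (@ld_memI _ _ _ _ (add x x') (add y y')).
- by rewrite mulDr zx z'x'.
- by rewrite mulDl zy z'y'.
Qed.

Definition ld_add (z z' : ld mul c) : ld mul c := Sub (add (val z) (val z')) (ld_add_proof z z').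

Lemma ld_add_val z z' : val (ld_add z z') = add (val z) (val z').
Proof. by []. Qed.

Lemma ld_zero_proof : ld_mem mul c zero.
Proof.
case: HR => _ _ [mul0r mulr0] _.
by apply: (@ld_memI _ _ _ _ zero zero); rewrite ?mul0r ?mulr0.
Qed.

Definition ld_zero : ld mul c := Sub zero ld_zero_proof.

Lemma ld_semiring : idem_semiring ld_add ld_zero (@ld_mul _ _ _ Hm c) (ld_one Hm c).
Proof.
case: (HR) => [[addA addC addrr add0r]] _ [mul0r mulr0] [mulDl mulDr].
split; [split | exact: ld_monoid | split | split].
- by move=> ? ? ?; apply: val_inj; rewrite /= addA.
- by move=> ? ?; apply: val_inj; rewrite /= addC.
- by move=> ?; apply: val_inj; rewrite /= addrr.
- by move=> ?; apply: val_inj; rewrite /= add0r.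
- by move=> z; apply: val_inj; rewrite /= mul0r.
- move=> z; apply: val_inj; case: (ld_memr z) => x zx.
  by rewrite (ld_mul_vall _ _ zx) /= mulr0.
- by move=> z1 z2 z3; apply: val_inj; rewrite /= mulDl.
- move=> z1 z2 z3; apply: val_inj; case: (ld_memr z1) => x z1x.
  rewrite (ld_mul_vall Hm (ld_add z2 z3) z1x) !ld_add_val.
  by rewrite (ld_mul_vall Hm z2 z1x) (ld_mul_vall Hm z3 z1x) mulDr.
Qed.

Lemma ld_omega om : is_omega mul one om -> is_omega (@ld_mul _ _ _ Hm c) (ld_one Hm c) om.
Proof.
case=> om_gt0 om_idem; split=> // z; apply: val_inj.
case: (ld_meml z) => a za; have E := ld_rpow Hm om za.
by rewrite (ld_mul_valr _ _ E) E; case: Hm => mulA _ _; rewrite -mulA om_idem.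
Qed.

Lemma ld_rle (z z' : ld mul c) : rle ld_add z z' <-> rle add (val z) (val z').
Proof. by rewrite /rle; split=> [/(congr1 val) | zz']; last apply: val_inj. Qed.
End LocalDivisorSemiring.

Lemma SF_bigcup (A : Type) (C : lang A -> Prop) (I : finType) (P : pred I) (L : I -> lang A) :
  SF C lempty -> (forall i, SF C (L i)) -> SF C (fun w => exists2 i, P i & L i w).
Proof.
move=> SF0 SFL; suff SFs : forall s : seq I, SF C (fun w => exists2 i, i \in s & L i w).
  have memP i : (i \in [seq j <- enum I | P j]) = P i by rewrite mem_filter mem_enum andbT.
  apply: SF_equiv (SFs [seq j <- enum I | P j]) _ => w.
  by split=> -[i Pi Liw]; exists i => //; move: Pi; rewrite memP.
elim=> [|i s IH]; first by apply: SF_equiv SF0 _ => w; split=> // -[].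
apply: SF_equiv (SF_union (SFL i) IH) _ => w; split.
- case=> [Liw|[j js Ljw]]; first by exists i; rewrite ?mem_head.
  by exists j; rewrite ?in_cons ?js ?orbT.
- by case=> j; rewrite in_cons => /orP [/eqP->|js] Ljw; [left | right; exists j].
Qed.

Section FirstCover.
Variables (A : Type) (I : finType) (L : I -> lang A).

Definition first_cover (i : I) : lang A :=
  fun w => L i w /\ forall j, enum_rank j < enum_rank i -> ~ L j w.

Lemma first_cover_ex i w : L i w -> exists j, first_cover j w.
Proof.
move: {2}(enum_rank i : nat) (erefl (enum_rank i : nat)) => n.
elim/ltn_ind: n i => n IH i Ei Liw.
case: (pselect (exists2 j, enum_rank j < enum_rank i & L j w)) => [[j ji Ljw]|none].
- by apply: (IH _ _ j erefl Ljw); rewrite -Ei.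
- by exists i; split=> // j ji Ljw; apply: none; exists j.
Qed.

Lemma first_cover_uniq i j w : first_cover i w -> first_cover j w -> i = j.
Proof.
move=> [Liw min_i] [Ljw min_j]; apply: enum_rank_inj; apply: val_inj.
by case: (ltngtP (enum_rank i) (enum_rank j)) => // [/min_j | /min_i].
Qed.

Lemma SF_first_cover (C : lang A -> Prop) i :
  SF C lempty -> (forall j, SF C (L j)) -> SF C (first_cover i).
Proof.
move=> SF0 SFL.
have SFprev := SF_bigcup [pred j | enum_rank j < enum_rank i] SF0 SFL.
apply: SF_equiv (SF_inter (SFL i) (SF_compl SFprev)) _ => w.
split=> [[Liw not_prev] | [Liw min_i]].
- by split=> // j ji Ljw; apply: not_prev; exists j.
- by split=> // -[j ji Ljw]; exact: min_i ji Ljw.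
Qed.
End FirstCover.

Definition words_over {T : finType} (B : {set T}) : lang T := fun w => all (fun a => a \in B) w.

Section WordsOver.
Variables (T : finType) (B : {set T}).

Lemma words_over_cat u v : words_over B (u ++ v) <-> words_over B u /\ words_over B v.
Proof. by rewrite /words_over all_cat; split=> [/andP | [-> ->]]. Qed.

Lemma words_over_cons a w : words_over B (a :: w) <-> a \in B /\ words_over B w.
Proof. by rewrite /words_over /=; split=> [/andP | [-> ->]]. Qed.

Lemma words_over_wpow u n : words_over B u -> words_over B (wpow u n).
Proof. by move=> Bu; elim: n => [|n IH] //; rewrite wpowS; exact/words_over_cat. Qed.

Lemma words_over_setT w : words_over [set: T] w.
Proof. by apply/allP => x; rewrite /= in_setT. Qed.

Lemma words_over_setD1 c w : words_over (B :\ c) w -> words_over B w /\ c \notin w.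
Proof.
move=> /allP Bw; split; first by apply/allP => x /Bw; rewrite inE => /andP [].
by apply/negP => /Bw; rewrite !inE eqxx.
Qed.
End WordsOver.

Lemma words_over_last {T : finType} (B : {set T}) (c : T) w :
  words_over B w -> ~ words_over (B :\ c) w ->
  exists p d, [/\ w = p ++ c :: d, words_over B p & words_over (B :\ c) d].
Proof.
elim: w => [|a w IH] //= /words_over_cons [aB Bw] not_Bcw.
case: (pselect (words_over (B :\ c) w)) => [Bcw | /(IH Bw) [p [d [-> Bp Bcd]]]].
- exists [::], w; split=> //; case: (eqVneq a c) => [-> // | nac].
  by case: not_Bcw; apply/words_over_cons; rewrite !inE nac aB.
- by exists (a :: p), d; split=> //; exact/words_over_cons.
Qed.

(** * Covers witnessing a saturated set *)

Record entry (T N R : Type) := Entry { elang : lang T; emon : N; erat : R }.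

Section Covers.
Variables (T N : finType) (R : Type) (mulN : N -> N -> N) (oneN : N).
Variables (add : R -> R -> R) (mul : R -> R -> R) (one : R).
Variables (al : T -> N) (be : T -> R) (S : N -> R -> Prop).

Definition recognized : lang T -> Prop :=
  fun L => exists F : {set N}, forall w, L w <-> wprod mulN oneN al w \in F.

Definition good_entry (e : entry T N R) : Prop :=
  [/\ SF recognized (elang e), S (emon e) (erat e) &
      forall w, elang e w ->
        wprod mulN oneN al w = emon e /\ rle add (wprod mul one be w) (erat e)].

Definition good_cover (B : {set T}) : Prop :=
  exists (I : finType) (cov : I -> entry T N R),
    (forall i, good_entry (cov i)) /\ (forall w, words_over B w -> exists i, elang (cov i) w).

Lemma SF_recognized_preim (F : {set N}) : SF recognized (fun w => wprod mulN oneN al w \in F).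
Proof. by apply: SF_base; exists F. Qed.

Lemma SF_recognized_full : SF recognized lfull.
Proof. by apply: SF_equiv (SF_recognized_preim setT) _ => w; rewrite in_setT. Qed.

Lemma SF_recognized_empty : SF recognized lempty.
Proof. by apply: SF_equiv (SF_recognized_preim set0) _ => w; rewrite in_set0. Qed.

Lemma SF_words_over (B : {set T}) : SF recognized (words_over B).
Proof.
have SFavoid (l : seq T) : SF recognized (fun w => all (fun x => x \notin l) w).
  elim: l => [|a l IH].
    by apply: SF_equiv SF_recognized_full _ => w; split=> // _; elim: w.
  have SFno_a : SF recognized (lcompl (lconcat lfull (lconcat (lletter a) lfull))).
    apply/SF_compl/SF_concat; first exact: SF_recognized_full.
    exact: SF_concat (SF_letter _ _) SF_recognized_full.
  apply: SF_equiv (SF_inter SFno_a IH) _ => w; split.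
  - case=> no_a /allP not_l; apply/allP => x xw; rewrite inE negb_or not_l // andbT.
    apply/negP => /eqP Ex; subst x; apply: no_a; case/splitPr: xw => [p q].
    by exists p, (a :: q); split=> //; split=> //; exists [:: a], q.
  - move=> not_al; split.
      case=> p [q [Ew [_ [u [v [Eq [Eu _]]]]]]].
      by move: not_al; rewrite Ew Eq Eu all_cat /= inE eqxx andbF.
    by apply/allP => x /(allP not_al); rewrite inE negb_or => /andP [].
apply: SF_equiv (SFavoid (enum (~: B))) _ => w.
by split=> /allP Bw; apply/allP => x /Bw; rewrite mem_enum in_setC negbK.
Qed.
End Covers.

Section LetterSaturated.
Variables (N R T : Type) (mulN : N -> N -> N) (oneN : N).
Variables (add : R -> R -> R) (mul : R -> R -> R) (one : R) (om : nat).
Variables (al : T -> N) (be : T -> R) (S : N -> R -> Prop).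

Definition letter_saturated : Prop :=
  [/\ S oneN one, (forall a, S (al a) (be a)),
      (forall s q t r, S s q -> S t r -> S (mulN s t) (mul q r)) &
      (forall e r, mulN e e = e -> S e r ->
         S e (add (rpow mul one r om) (rpow mul one r om.+1)))].

Hypothesis HS : letter_saturated.

Lemma saturated_wprod w : S (wprod mulN oneN al w) (wprod mul one be w).
Proof. by case: HS => S1 Sa SM _; elim: w => [|a w IH] //=; exact: SM. Qed.

Lemma saturated_rpow n r k : S n r -> S (rpow mulN oneN n k) (rpow mul one r k).
Proof. by case: HS => S1 _ SM _ Snr; elim: k => [|k IH] //=; exact: SM. Qed.
End LetterSaturated.

Section GroupCase.
Variables (N : finType) (mulN : N -> N -> N) (oneN : N).
Hypothesis HN : is_monoid mulN oneN.
Variables (R : finType) (add : R -> R -> R) (zero : R) (mul : R -> R -> R) (one : R).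
Hypothesis HR : idem_semiring add zero mul one.
Variable om : nat.
Hypothesis Hom : is_omega mul one om.
Variables (T : finType) (al : T -> N) (be : T -> R) (S : N -> R -> Prop).
Hypothesis HS : letter_saturated mulN oneN add mul one om al be S.
Variable B : {set T}.
Hypothesis unitB : forall b, b \in B -> is_unit mulN oneN (al b) /\ is_unit mul one (be b).

Let HRm := idem_semiring_monoid HR.
Local Notation evN := (wprod mulN oneN al).
Local Notation evR := (wprod mul one be).

Lemma unit_wprod w : words_over B w -> is_unit mulN oneN (evN w) /\ is_unit mul one (evR w).
Proof.
elim: w => [|a w IH]; first by split; apply: unit_one.
by move=> /words_over_cons [/unitB [Ua Ua'] /IH [Uw Uw']]; split; exact: unit_mul.
Qed.

Definition loop_values : {set R} :=
  [set v | `[< exists w, [/\ words_over B w, evN w = oneN & evR w = v] >]].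

Definition prod_1D (l : seq R) : R := foldr (fun v acc => mul (add one v) acc) one l.

Definition loop_bound : R := prod_1D (enum loop_values).

(* A loop value v is a unit, so v^om = one and the omega closure gives (1, 1 + v). *)
Lemma saturated_prod_1D l : {subset l <= loop_values} -> S oneN (prod_1D l).
Proof.
case: HS => S1 _ SM Som; case: HN => _ mul1N _.
elim: l => [|v l IH] //= sub_l; rewrite -[oneN]mul1N; apply: SM; last first.
  by apply: IH => v' v'l; apply: sub_l; rewrite in_cons v'l orbT.
have := sub_l v (mem_head v l); rewrite inE => /asboolP [w [Bw w1 wv]].
have := Som oneN v (mul1N oneN); rewrite -w1 -wv; move/(_ (saturated_wprod HS w)).
rewrite (rpowSr HRm) (unit_rpow_omega HRm Hom (proj2 (unit_wprod Bw))).
by case: HRm => _ mul1m _; rewrite mul1m.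
Qed.

Lemma saturated_loop_bound : S oneN loop_bound.
Proof. by apply: saturated_prod_1D => v; rewrite mem_enum. Qed.

Lemma rle_one_prod_1D l : rle add one (prod_1D l).
Proof.
elim: l => [|v l IH] /=; first exact: rle_refl HR one.
have := rle_mul HR (rle_addl HR one v) IH.
by case: HRm => _ mul1m _; rewrite mul1m.
Qed.

Lemma rle_prod_1D v l : v \in l -> rle add v (prod_1D l).
Proof.
case: HRm => _ mul1m mulm1; elim: l => [|x l IH] //=; rewrite in_cons => /orP [/eqP ->|/IH vl].
- by have := rle_mul HR (rle_addr HR one x) (rle_one_prod_1D l); rewrite mulm1.
- by have := rle_mul HR (rle_addl HR one x) vl; rewrite mul1m.
Qed.

Definition group_entry (t : N) : entry T N R :=
  match pselect (exists w, words_over B w /\ evN w = t) with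
  | left ex_t => Entry (linter (words_over B) (fun w => evN w = t)) t
                       (mul (evR (sval (cid ex_t))) loop_bound)
  | right _ => Entry lempty oneN one
  end.

(* With wt the chosen word of value t and k a common period of the units
   evN wt and evR wt, any w of value t factors as evR w = evR wt * evR (wt^(k-1) w)
   where wt^(k-1) w is a loop. *)
Lemma group_entry_good t : good_entry mulN oneN add mul one al be S (group_entry t).
Proof.
rewrite /group_entry; case: pselect => [ex_t|_]; last first.
  by split=> //=; [exact: SF_recognized_empty | case: HS].
case: cid => wt [Bwt wtt] /=; split=> /=.
- apply: SF_inter; first exact: SF_words_over.
  apply: SF_equiv (SF_recognized_preim mulN oneN al [set t]) _ => w.
  by rewrite inE; split=> /eqP.
- case: HS => _ _ SM _; case: HN => _ _ mulN1; rewrite -(mulN1 t) -wtt.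
  exact: SM (saturated_wprod HS wt) saturated_loop_bound.
- move=> w [Bw wt']; split=> //.
  have [Uwt Uwt'] := unit_wprod Bwt.
  have [k k_gt0 [wtk wtk']] := unit_common_period HN HRm Hom Uwt Uwt'.
  have Bloop : words_over B (wpow wt k.-1 ++ w).
    by apply/words_over_cat; split=> //; exact: words_over_wpow.
  have loop1 : evN (wpow wt k.-1 ++ w) = oneN.
    by rewrite wprod_cat // wprod_wpow // wt' -wtt -rpowSr // prednK.
  have -> : evR w = mul (evR wt) (evR (wpow wt k.-1 ++ w)).
    case: HRm => mulA mul1m _; rewrite wprod_cat // wprod_wpow // mulA -rpowS.
    by rewrite prednK // wtk' mul1m.
  apply: (rle_mull HR); apply: rle_prod_1D; rewrite mem_enum inE; apply/asboolP.
  by exists (wpow wt k.-1 ++ w).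
Qed.

Lemma group_good_cover : good_cover mulN oneN add mul one al be S B.
Proof.
exists N, group_entry; split; first exact: group_entry_good.
move=> w Bw; exists (evN w); rewrite /group_entry; case: pselect => [ex|[]]; last by exists w.
by case: cid.
Qed.
End GroupCase.

Definition c_headed {T : Type} (c : T) (m : seq T) := m = [::] \/ exists r, m = c :: r.

Lemma cat_c_headed_inj {T : eqType} (c : T) u1 u2 m1 m2 : c \notin u1 -> c \notin u2 ->
  c_headed c m1 -> c_headed c m2 -> u1 ++ m1 = u2 ++ m2 -> u1 = u2 /\ m1 = m2.
Proof.
elim: u1 u2 => [|a u1 IH] [|b u2] //=.
- by move=> _ cu2 [->|[r ->]] _ // [cb _]; move: cu2; rewrite inE -cb eqxx.
- by move=> cu1 _ _ [->|[r ->]] // [ac _]; move: cu1; rewrite inE ac eqxx.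
- rewrite !inE !negb_or => /andP [_ cu1] /andP [_ cu2] hm1 hm2 [-> E].
  by case: (IH _ cu1 cu2 hm1 hm2 E) => -> ->.
Qed.

Lemma words_over_c_split {T : finType} (B : {set T}) c r : words_over B r ->
  exists u m, [/\ r = u ++ m, words_over (B :\ c) u, words_over B m & c_headed c m].
Proof.
elim: r => [|a r IH]; first by exists [::], [::]; split=> //; left.
move=> /words_over_cons [aB /IH [u [m [-> Bu Bm hm]]]].
case: (eqVneq a c) => [ac|nac].
- exists [::], (a :: u ++ m); split=> //; last by right; exists (u ++ m); rewrite ac.
  apply/words_over_cons; split=> //; apply/words_over_cat; split=> //.
  exact: (words_over_setD1 Bu).1.
- by exists (a :: u), m; split=> //; apply/words_over_cons; rewrite !inE nac aB.
Qed.

Section Unfold.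
Variables (T I : finType) (H : I -> lang T) (c : T) (B : {set T}).
Hypothesis cB : c \in B.
Hypothesis H_sub : forall i u, H i u -> words_over (B :\ c) u.
Hypothesis H_cover : forall u, words_over (B :\ c) u -> exists i, H i u.
Hypothesis H_disjoint : forall i j u, H i u -> H j u -> i = j.

Definition c_blocks : lang T := fun m => words_over B m /\ c_headed c m.

Inductive unfolds : seq I -> seq T -> Prop :=
| unfolds_nil : unfolds [::] [::]
| unfolds_cons i s u m : H i u -> unfolds s m -> unfolds (i :: s) (c :: u ++ m).

(* The substitution i |-> c H_i, applied to a language over I. *)
Definition unfold_lang (K : lang I) : lang T := fun m => exists s, K s /\ unfolds s m.

Lemma unfolds_c_blocks s m : unfolds s m -> c_blocks m.
Proof.
elim=> [|i s' u m' Hiu _ [Bm' _]]; first by split=> //; left.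
split; last by right; exists (u ++ m').
apply/words_over_cons; split=> //; apply/words_over_cat; split=> //.
exact: (words_over_setD1 (H_sub Hiu)).1.
Qed.

Lemma unfolds_c_headed s m : unfolds s m -> c_headed c m.
Proof. by case=> [|i s' u m' _ _]; [left | right; exists (u ++ m')]. Qed.

Lemma unfolds_inj s1 s2 m : unfolds s1 m -> unfolds s2 m -> s1 = s2.
Proof.
move=> U1; elim: U1 s2 => [|i s u m' Hiu Us IH] s2 U2.
- by move: U2; move Em: [::] => mm U2; case: U2 Em.
- move: U2; move Em: (c :: u ++ m') => mm U2; case: U2 Em => [//|j s' u' m'' Hju Us'] [E].
  have [uu' mm'] := cat_c_headed_inj (words_over_setD1 (H_sub Hiu)).2
    (words_over_setD1 (H_sub Hju)).2 (unfolds_c_headed Us) (unfolds_c_headed Us') E.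
  by subst u' m''; rewrite (H_disjoint Hiu Hju) (IH _ Us').
Qed.

Lemma unfolds_cat s1 s2 m :
  unfolds (s1 ++ s2) m <-> exists m1 m2, [/\ m = m1 ++ m2, unfolds s1 m1 & unfolds s2 m2].
Proof.
split.
- elim: s1 m => [|i s1 IH] m /=; first by exists [::], m; split=> //; exact: unfolds_nil.
  move Es: (i :: s1 ++ s2) => ss U; case: U Es => [//|j s u m' Hju Us] [-> Es]; subst s.
  case: (IH _ Us) => m1 [m2 [-> U1 U2]]; exists (c :: u ++ m1), m2.
  by split=> //; [rewrite /= catA | exact: unfolds_cons].
- case=> m1 [m2 [-> U1 U2]]; elim: U1 => [|i s u m' Hiu Us IH] //=.
  by rewrite -catA; exact: unfolds_cons.
Qed.

Lemma c_blocks_unfold m : c_blocks m -> exists s, unfolds s m.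
Proof.
elim: {m}(size m) {-2}m (leqnn (size m)) => [|n IH] m.
  by case: m => // _ _; exists [::]; exact: unfolds_nil.
move=> size_m [Bm [->|[r Er]]]; first by exists [::]; exact: unfolds_nil.
move: Bm; rewrite Er => /words_over_cons [_ /(words_over_c_split c) [u [m' [Er' Bu Bm' hm']]]].
case: (H_cover Bu) => i Hiu; case: (IH m') => [||s Us]; last first.
- by exists (i :: s); rewrite Er'; exact: unfolds_cons.
- by [].
- by move: size_m; rewrite Er Er' /= size_cat; lia.
Qed.

Lemma SF_c_blocks (C : lang T -> Prop) : (forall D, SF C (words_over D)) -> SF C c_blocks.
Proof.
move=> SF_over.
apply: SF_equiv (SF_union (SF_over set0)
  (SF_inter (SF_over B) (SF_concat (SF_letter _ c) (SF_over setT)))) _ => w; split.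
- case=> [B0w | [Bw [p [q [Ew [Ep _]]]]]].
  + by case: w B0w => [|a w]; [split=> //; left | rewrite /words_over /= in_set0].
  + by rewrite /lletter in Ep; subst w p; split=> //; right; exists q.
- case=> Bw [Ew|[r Ew]]; subst w; [by left | right; split=> //].
  by exists [:: c], r; split=> //; split=> //; exact: words_over_setT.
Qed.

Lemma SF_unfold_lang (Ca : lang T -> Prop) (Cb : lang I -> Prop) :
  (forall D, SF Ca (words_over D)) -> (forall i, SF Ca (H i)) ->
  (forall K, Cb K -> SF Ca (unfold_lang K)) -> forall K, SF Cb K -> SF Ca (unfold_lang K).
Proof.
move=> SF_over SFH SF_base K.
elim=> {K} [K CbK | i | K L _ SFK _ SFL | K _ SFK | K L _ SFK _ SFL].
- exact: SF_base.
- apply: SF_equiv (SF_concat (SF_letter _ c) (SFH i)) _ => m; split.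
  + case=> p [q [-> [-> Hiq]]]; exists [:: i]; split=> //.
    by rewrite -[q]cats0; apply: unfolds_cons => //; exact: unfolds_nil.
  + case=> s [-> U]; move: U; move Es: [:: i] => ss U.
    case: U Es => [//|j s' u m' Hju Us] [-> Es']; subst s'.
    move: Us; move Es0: [::] => s0 Us; case: Us Es0 => // _.
    by exists [:: c], u; rewrite cats0.
- apply: SF_equiv (SF_union SFK SFL) _ => m; split.
  + by case=> -[s [Ks U]]; exists s; split=> //; [left | right].
  + by case=> s [[Ks|Ls] U]; [left | right]; exists s.
- apply: SF_equiv (SF_inter (SF_c_blocks SF_over) (SF_compl SFK)) _ => m; split.
  + case=> /c_blocks_unfold [s U] notK; exists s; split=> // Ks; apply: notK; by exists s.
  + case=> s [notK U]; split; first exact: unfolds_c_blocks U.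
    by case=> s' [Ks' U']; apply: notK; rewrite (unfolds_inj U U').
- apply: SF_equiv (SF_concat SFK SFL) _ => m; split.
  + case=> m1 [m2 [-> [[s1 [Ks1 U1]] [s2 [Ls2 U2]]]]]; exists (s1 ++ s2); split.
      by exists s1, s2.
    by apply/unfolds_cat; exists m1, m2.
  + case=> s [[s1 [s2 [-> [Ks1 Ls2]]]] /unfolds_cat [m1 [m2 [-> U1 U2]]]].
    by exists m1, m2; split=> //; split; [exists s1 | exists s2].
Qed.
End Unfold.

Section SandwichPowers.
Variables (M : Type) (mul : M -> M -> M) (one : M).
Hypothesis Hm : is_monoid mul one.

Lemma rpow_absorbed c m j : mul (mul c m) m = mul c m -> 0 < j ->
  mul c (rpow mul one m j) = mul c m.
Proof.
case: (Hm) => mulA _ mulm1 cmm; case: j => // j _; elim: j => [|j IH]; first by rewrite /= mulm1.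
by rewrite rpowSr // mulA IH cmm.
Qed.

Lemma rpow_sandwich_stable c n j : mul (mul c (mul n c)) (mul n c) = mul c (mul n c) -> 1 < j ->
  rpow mul one (mul n c) j = rpow mul one (mul n c) 2.
Proof.
case: (Hm) => mulA _ mulm1 cmm; case: j => [|[|j]] // _; elim: j => [|j IH] //.
by rewrite rpowS IH -mulA (rpow_absorbed cmm) //= mulm1 mulA.
Qed.
End SandwichPowers.

Section OmegaPowers.
Variables (R : Type) (add : R -> R -> R) (zero : R) (mul : R -> R -> R) (one : R).
Hypothesis HR : idem_semiring add zero mul one.
Variable om : nat.
Hypothesis Hom : is_omega mul one om.

Let Hm := idem_semiring_monoid HR.

Lemma rpow_omegaS_omega y : rpow mul one (rpow mul one y om.+1) om = rpow mul one y om.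
Proof.
case: Hom => _ om_idem.
by rewrite -(rpowM Hm) mulnC (rpowM Hm) (rpow_idem Hm (om_idem y)).
Qed.

Lemma rpow_omegaS_omegaS y : rpow mul one (rpow mul one y om.+1) om.+1 = rpow mul one y om.+1.
Proof.
case: Hom => om_gt0 om_idem; rewrite -(rpowM Hm) (_ : om.+1 * om.+1 = om * om.+2 + 1); last lia.
rewrite (rpowD Hm) (rpowM Hm y om) (rpow_idem Hm (om_idem y)) // (rpowSr Hm y om).
by case: Hm => _ _ mulm1; rewrite /= mulm1.
Qed.

Lemma omega_sum_mulr_omega y :
  let s := add (rpow mul one y om) (rpow mul one y om.+1) in mul s (rpow mul one y om) = s.
Proof.
case: Hom => _ om_idem; case: HR => _ [mulA _ _] _ [mulDl _] /=.
by rewrite mulDl om_idem -mulA om_idem.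
Qed.
End OmegaPowers.

Section LocalDivisorStep.
Variables (N : finType) (mulN : N -> N -> N) (oneN : N).
Hypothesis HN : is_monoid mulN oneN.
Variables (R : finType) (add : R -> R -> R) (zero : R) (mul : R -> R -> R) (one : R).
Hypothesis HR : idem_semiring add zero mul one.
Variable om : nat.
Hypothesis Hom : is_omega mul one om.
Variables (T : finType) (al : T -> N) (be : T -> R) (S : N -> R -> Prop).
Hypothesis HS : letter_saturated mulN oneN add mul one om al be S.
Variables (B : {set T}) (c : T).
Hypothesis cB : c \in B.
Variables (I : finType) (cov : I -> entry T N R).
Hypothesis cov_good : forall i, good_entry mulN oneN add mul one al be S (cov i).
Hypothesis cov_cover : forall u, words_over (B :\ c) u -> exists i, elang (cov i) u.

Local Notation HRm := (idem_semiring_monoid HR).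
Local Notation nc := (al c).
Local Notation rc := (be c).
Local Notation NL := (ld mulN nc).
Local Notation RL := (ld mul rc).
Local Notation mulNL := (@ld_mul _ _ _ HN nc).
Local Notation oneNL := (ld_one HN nc).
Local Notation addRL := (@ld_add _ _ _ _ _ HR rc).
Local Notation mulRL := (@ld_mul _ _ _ HRm rc).
Local Notation oneRL := (ld_one HRm rc).
Local Notation evN := (wprod mulN oneN al).
Local Notation evR := (wprod mul one be).
Local Notation good := (good_entry mulN oneN add mul one al be S).

Definition block (i : I) : entry T N R :=
  Entry (linter (words_over (B :\ c)) (first_cover (fun j => elang (cov j)) i))
        (emon (cov i)) (erat (cov i)).

Definition blang (i : I) : lang T := elang (block i).

Lemma block_good i : good (block i).
Proof.
case: (cov_good i) => SFi Si vali; split=> //.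
- apply: SF_inter; first exact: SF_words_over.
  apply: SF_first_cover; first exact: SF_recognized_empty.
  by move=> j; case: (cov_good j).
- by move=> w [_ [/vali]].
Qed.

Lemma block_sub i u : blang i u -> words_over (B :\ c) u.
Proof. by case. Qed.

Lemma block_cover u : words_over (B :\ c) u -> exists i, blang i u.
Proof.
move=> Bu; have [i cov_iu] := cov_cover Bu.
by have [j fj] := @first_cover_ex _ _ (fun j => elang (cov j)) i u cov_iu; exists j.
Qed.

Lemma block_disjoint i j u : blang i u -> blang j u -> i = j.
Proof. by move=> [_ fi] [_ fj]; exact: first_cover_uniq fi fj. Qed.

Lemma block_evN i u : blang i u -> evN u = emon (block i).
Proof. by move=> Hiu; case: (block_good i) => _ _ /(_ u Hiu) []. Qed.

Lemma block_evR i u : blang i u -> rle add (evR u) (erat (block i)).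
Proof. by move=> Hiu; case: (block_good i) => _ _ /(_ u Hiu) []. Qed.

Definition block_mon (i : I) : NL :=
  Sub (mulN nc (mulN (emon (block i)) nc)) (ld_mem_sandwich HN nc _).

Definition block_rat (i : I) : RL :=
  Sub (mul rc (mul (erat (block i)) rc)) (ld_mem_sandwich HRm rc _).

Definition S_ld (n' : NL) (x' : RL) : Prop :=
  (n' = oneNL /\ x' = oneRL) \/
  exists n x, [/\ S n x, val n' = mulN nc (mulN n nc) & val x' = mul rc (mul x rc)].

Lemma S_ld_val n' x' : S_ld n' x' -> S (val n') (val x').
Proof.
case: HS => _ Sa SM _; case=> [[-> ->] | [n [x [Snx -> ->]]]]; first exact: Sa.
exact: SM (Sa c) (SM _ _ _ _ Snx (Sa c)).
Qed.

Lemma S_ld_mul n1 x1 n2 x2 : S_ld n1 x1 -> S_ld n2 x2 -> S_ld (mulNL n1 n2) (mulRL x1 x2).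
Proof.
have [_ mul1N mulN1] := ld_monoid HN nc; have [_ mul1R mulR1] := ld_monoid HRm rc.
case=> [[-> ->] | [n [x [Snx En1 Ex1]]]]; first by rewrite mul1N mul1R.
case=> [[-> ->] | [n' [x' [Snx' En2 Ex2]]]].
  by rewrite mulN1 mulR1; right; exists n, x.
case: HS => _ Sa SM _; have [mulNA _ _] := HN; have [mulA _ _] := HRm.
right; exists (mulN n (mulN nc n')), (mul x (mul rc x')); split.
- exact: SM Snx (SM _ _ _ _ (Sa c) Snx').
- have En1' : val n1 = mulN (mulN nc n) nc by rewrite En1 mulNA.
  by rewrite (ld_mul_vall _ _ En1') En2 !mulNA.
- have Ex1' : val x1 = mul (mul rc x) rc by rewrite Ex1 mulA.
  by rewrite (ld_mul_vall _ _ Ex1') Ex2 !mulA.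
Qed.

Lemma S_ld_omega n' x' : mulNL n' n' = n' -> S_ld n' x' ->
  S_ld n' (addRL (rpow mulRL oneRL x' om) (rpow mulRL oneRL x' om.+1)).
Proof.
move=> n'n'; case=> [[-> ->] | [n [x [Snx En Ex]]]].
  left; split=> //; rewrite !(rpow1 (ld_monoid HRm rc)).
  by case: (ld_semiring HR rc) => [[_ _ addrr _]] _ _ _.
case: HS => _ Sa SM Som; case: (Hom) => om_gt0 _.
pose m := mulN n nc; pose y := mul x rc.
have cmm : mulN (mulN nc m) m = mulN nc m.
  by move/(congr1 val): n'n'; rewrite (ld_mul_valr _ _ En) En.
have Smy : S m y := SM _ _ _ _ Snx (Sa c).
have e_idem : mulN (rpow mulN oneN m om.+1) (rpow mulN oneN m om.+1) = rpow mulN oneN m om.+1.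
  by rewrite -(rpowD HN) !(rpow_sandwich_stable HN cmm) //; lia.
have := Som _ _ e_idem (saturated_rpow HS om.+1 Smy).
rewrite (rpow_omegaS_omega HR Hom) (rpow_omegaS_omegaS HR Hom) => Se.
(* With m = n c and y = x c, the omega closure at the idempotent m^(om+1)
   yields m^(2 om) n, whose sandwich c m^(2 om) n c collapses to c n c. *)
right; exists (mulN (mulN (rpow mulN oneN m om.+1) (rpow mulN oneN m om.-1)) n).
exists (mul (mul (add (rpow mul one y om) (rpow mul one y om.+1)) (rpow mul one y om.-1)) x).
split.
- exact: SM (SM _ _ _ _ Se (saturated_rpow HS om.-1 Smy)) Snx.
- have [mulNA _ _] := HN; rewrite En -mulNA -/m -(rpowD HN) -(rpowSr HN).
  by rewrite (rpow_absorbed HN cmm).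
- have Ex' : val x' = mul rc y by rewrite Ex.
  rewrite ld_add_val (ld_rpow HRm om Ex') (ld_rpow HRm om.+1 Ex').
  have [_ [mulA _ _] _ [_ mulDr]] := HR; rewrite -mulDr; congr (mul rc _).
  rewrite -mulA -/y -mulA -(rpowSr HRm) prednK //.
  by rewrite (omega_sum_mulr_omega HR Hom).
Qed.

Lemma S_ld_saturated : letter_saturated mulNL oneNL addRL mulRL oneRL om block_mon block_rat S_ld.
Proof.
split; [by left | | exact: S_ld_mul | exact: S_ld_omega].
by move=> i; right; exists (emon (block i)), (erat (block i)); case: (block_good i).
Qed.

Lemma unfolds_evN s m : unfolds blang c s m ->
  val (wprod mulNL oneNL block_mon s) = mulN (evN m) nc.
Proof.
have [mulNA mul1N _] := HN; elim=> [|i s' u m' Hiu _ IH]; first by rewrite /= mul1N.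
have Ei : val (block_mon i) = mulN (mulN nc (emon (block i))) nc by rewrite /= mulNA.
rewrite !wprod_cons (ld_mul_vall _ _ Ei) IH (wprod_cat HN) (block_evN Hiu).
by rewrite !mulNA.
Qed.

Lemma unfolds_evR s m : unfolds blang c s m ->
  rle add (mul (evR m) rc) (val (wprod mulRL oneRL block_rat s)).
Proof.
have [mulA mul1m _] := HRm; elim=> [|i s' u m' Hiu _ IH].
  by rewrite /= mul1m; exact: rle_refl HR _.
have Ei : val (block_rat i) = mul (mul rc (erat (block i))) rc by rewrite /= mulA.
rewrite !wprod_cons (ld_mul_vall _ _ Ei) (wprod_cat HRm) (mulA rc) -mulA.
exact: (rle_mul HR (rle_mull HR rc (block_evR Hiu)) IH).
Qed.

Lemma SF_unfold_recognized K : recognized mulNL oneNL block_mon K ->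
  SF (recognized mulN oneN al) (unfold_lang blang c K).
Proof.
case=> F KF; pose G : {set N} := [set n | mulN n nc \in [set val z | z in F]].
apply: SF_equiv (SF_inter (SF_c_blocks c B (SF_words_over mulN oneN al))
  (SF_recognized_preim mulN oneN al G)) _ => m; split.
- case=> Bm; rewrite inE => /imsetP [z Fz Ez].
  have [s U] := c_blocks_unfold cB block_cover Bm; exists s; split=> //.
  apply/KF; suff -> : wprod mulNL oneNL block_mon s = z by [].
  by apply: val_inj; rewrite (unfolds_evN U).
- case=> s [Ks U]; split; first exact: (unfolds_c_blocks cB block_sub U).
  by rewrite inE -(unfolds_evN U); apply: imset_f; exact/KF.
Qed.

Section Assemble.
Variables (J : finType) (covb : J -> entry I NL RL).
Hypothesis covb_good :
  forall j, good_entry mulNL oneNL addRL mulRL oneRL block_mon block_rat S_ld (covb j).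
Hypothesis covb_cover : forall s, words_over [set: I] s -> exists j, elang (covb j) s.

Definition c_entry (a : I) (j : J) (d : I) : entry T N R :=
  Entry (lconcat (lconcat (lconcat (blang a) (unfold_lang blang c (elang (covb j))))
                          (lletter c)) (blang d))
        (mulN (mulN (emon (block a)) (val (emon (covb j)))) (emon (block d)))
        (mul (mul (erat (block a)) (val (erat (covb j)))) (erat (block d))).

Lemma c_entry_good a j d : good (c_entry a j d).
Proof.
have [SFa Sa vala] := block_good a; have [SFd Sd vald] := block_good d.
have [SFj Sj valj] := covb_good j.
have [mulNA _ mulN1] := HN; have [mulA _ mulm1] := HRm; case: HS => _ _ SM _.
split.
- have SFblock i : SF (recognized mulN oneN al) (blang i) by case: (block_good i).
  have SFunf := SF_unfold_lang cB block_sub block_cover block_disjoint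
    (SF_words_over mulN oneN al) SFblock SF_unfold_recognized SFj.
  exact: SF_concat (SF_concat (SF_concat SFa SFunf) (SF_letter _ c)) SFd.
- exact: SM _ _ _ _ (SM _ _ _ _ Sa (S_ld_val Sj)) Sd.
- move=> w [w1 [wd [-> [[w2 [wc [-> [[wa [m [-> [Awa [s [Ks U]]]]]] Ewc]]]] Dwd]]]].
  rewrite /lletter in Ewc; subst wc.
  have [Ea Fa] := vala _ Awa; have [Ed Fd] := vald _ Dwd; have [Ej Fj] := valj _ Ks.
  rewrite !(wprod_cat HN) !(wprod_cat HRm) !wprod_cons /=; split.
  + by rewrite Ea Ed -Ej (unfolds_evN U) mulN1 !mulNA.
  + rewrite mulm1; apply: (rle_mul HR _ Fd); rewrite -mulA; apply: (rle_mul HR Fa).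
    exact: (rle_trans HR (unfolds_evR U) ((ld_rle HR _ _).1 Fj)).
Qed.

Definition step_entry (x : I + I * J * I) : entry T N R :=
  match x with
  | inl i => block i
  | inr (a, j, d) => c_entry a j d
  end.

(* A word with a letter c is cut at its last c and before its first c. *)
Lemma step_good_cover : good_cover mulN oneN add mul one al be S B.
Proof.
exists _, step_entry; split.
  by case=> [i | [[a j] d]]; [exact: block_good | exact: c_entry_good].
move=> w Bw; case: (pselect (words_over (B :\ c) w)) => [Bcw | not_Bcw].
  by have [i Hiw] := block_cover Bcw; exists (inl i).
have [p [d [-> Bp Bcd]]] := words_over_last Bw not_Bcw.
have [u [m [-> Bcu Bm hm]]] := words_over_c_split c Bp.
have [s U] := c_blocks_unfold cB block_cover (conj Bm hm).
have [j Ks] := covb_cover (words_over_setT s).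
have [a Hau] := block_cover Bcu; have [d' Hdd] := block_cover Bcd.
exists (inr (a, j, d')), ((u ++ m) ++ [:: c]), d; split; first by rewrite -!catA.
split=> //; exists (u ++ m), [:: c]; split=> //; split=> //.
by exists u, m; split=> //; split=> //; exists s.
Qed.
End Assemble.

Hypothesis ld_cover :
  forall (T' : finType) (al' : T' -> NL) (be' : T' -> RL) (S' : NL -> RL -> Prop),
  letter_saturated mulNL oneNL addRL mulRL oneRL om al' be' S' ->
  good_cover mulNL oneNL addRL mulRL oneRL al' be' S' [set: T'].

Lemma local_divisor_good_cover : good_cover mulN oneN add mul one al be S B.
Proof.
have [J [covb [covb_good covb_cover]]] := ld_cover S_ld_saturated.
exact: (step_good_cover covb_good covb_cover).
Qed.
End LocalDivisorStep.

Theorem good_cover_exists (om n : nat) (N : finType) (mulN : N -> N -> N) (oneN : N)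
    (R : finType) (add : R -> R -> R) (zero : R) (mul : R -> R -> R) (one : R) :
  #|N| + #|R| <= n -> is_monoid mulN oneN -> idem_semiring add zero mul one ->
  is_omega mul one om ->
  forall (T : finType) (al : T -> N) (be : T -> R) (S : N -> R -> Prop),
  letter_saturated mulN oneN add mul one om al be S ->
  forall B : {set T}, good_cover mulN oneN add mul one al be S B.
Proof.
elim: n N mulN oneN R add zero mul one
  => [|n IHn] N mulN oneN R add zero mul one size_NR HN HR Hom T al be S HS B.
  have : 0 < #|N| by apply/card_gt0P; exists oneN.
  lia.
elim: {B}#|B| {-2}B (leqnn #|B|) => [|k IHk] B size_B.
  apply: (group_good_cover HN HR Hom HS) => b bB.
  have : 0 < #|B| by apply/card_gt0P; exists b.
  lia.
case: (pselect (exists2 c, c \in B & ~ (is_unit mulN oneN (al c) /\ is_unit mul one (be c))))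
  => [[c cB not_unit] | all_units]; last first.
  apply: (group_good_cover HN HR Hom HS) => b bB; apply: contrapT => not_unit.
  by apply: all_units; exists b.
have [I [cov [cov_good cov_cover]]] : good_cover mulN oneN add mul one al be S (B :\ c).
  by apply: IHk; move: size_B; rewrite (cardsD1 c B) cB; lia.
apply: (local_divisor_good_cover (HN := HN) (HR := HR) Hom HS cB cov_good cov_cover)
  => T' al' be' S' HS'.
apply: (IHn _ _ _ _ _ _ _ _ _ (ld_monoid HN _) (ld_semiring HR _) (ld_omega HR _ Hom)
  _ _ _ _ HS').
have := ld_card_le mulN (al c); have := ld_card_le mul (be c).
move/not_andP: not_unit => [/(ld_card_lt HN) | /(ld_card_lt (idem_semiring_monoid HR))]; lia.
Qed.

Lemma mem_In {X : eqType} (x : X) s : x \in s -> List.In x s.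
Proof. by elim: s => [|y s IH] //=; rewrite in_cons => /orP [/eqP ->|/IH]; [left | right]. Qed.

(** * Imprints and the least saturated set *)

Section Main.
Variables (A : finType) (C : lang A -> Prop).
Variables (N : finType) (mulN : N -> N -> N) (oneN : N) (eta : seq A -> N).
Variables (R : finType) (add : R -> R -> R) (zero : R) (mul : R -> R -> R) (one : R).
Variables (rho : lang A -> R) (omega : nat).
Hypothesis Hcan : canonical_C_morphism C mulN oneN eta.
Hypothesis Hmr : multiplicative_rating add zero mul one rho.
Hypothesis Hnice : nice rho.
Hypothesis Hom : is_omega mul one omega.

Lemma canonical_monoid : is_monoid mulN oneN. Proof. by case: Hcan => [[]]. Qed.
Lemma eta_nil : eta [::] = oneN. Proof. by case: Hcan => [[_ []]]. Qed.
Lemma etaM u v : eta (u ++ v) = mulN (eta u) (eta v). Proof. by case: Hcan => [[_ [_ ->]]]. Qed.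
Lemma C_preimage F : C (preimage_lang eta F). Proof. by case: Hcan => [[]]. Qed.

Lemma C_ef_closed L : C L -> ef_closed eta 0 L.
Proof. by case: Hcan => _ /[apply] -[F ->] u v /= uv; rewrite /preimage_lang uv. Qed.

Lemma rating_semiring : idem_semiring add zero mul one. Proof. by case: Hmr. Qed.
Lemma rho0 : rho lempty = zero. Proof. by case: Hmr => _ []. Qed.
Lemma rhoU K L : rho (lunion K L) = add (rho K) (rho L). Proof. by case: Hmr => _ [_ ->]. Qed.
Lemma rho_nil : rho (lword [::]) = one. Proof. by case: Hmr. Qed.
Lemma rhoC K L : rho (lconcat K L) = mul (rho K) (rho L). Proof. by case: Hmr. Qed.

Local Notation HR := rating_semiring.
Local Notation HRm := (idem_semiring_monoid rating_semiring).

Lemma rho_mono K L : lsubset K L -> rle add (rho K) (rho L).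
Proof.
move=> KL; rewrite /rle -rhoU; congr rho; apply: lang_ext => w.
by split=> [[/KL|]|]; [| | right].
Qed.

Lemma lword_cat (u v : seq A) : lword (u ++ v) = lconcat (lword u) (lword v).
Proof.
apply: lang_ext => w; split; first by move=> ->; exists u, v.
by case=> p [q [-> [-> ->]]].
Qed.

Definition lpow (X : lang A) n : lang A := iter n (lconcat X) (lword [::]).

Lemma rho_lpow X n : rho (lpow X n) = rpow mul one (rho X) n.
Proof. by elim: n => [|n IH]; [exact: rho_nil | rewrite /lpow iterS -/(lpow X n) rhoC IH]. Qed.

Lemma rho_le_words K z : (forall w, K w -> rle add (rho (lword w)) z) -> rle add (rho K) z.
Proof.
move=> Kz; have [s [sK ->]] := Hnice K.
elim: s sK => [|w s IH] sK.
  have -> : lfin [::] = @lempty A by apply: lang_ext.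
  by rewrite rho0; exact: rle0 HR _.
have -> : lfin (w :: s) = lunion (lword w) (lfin s).
  apply: lang_ext => w'; rewrite /lfin /lunion /lword in_cons.
  by split=> [/orP [/eqP e | ws] | [-> | ws]]; [left | right | rewrite eqxx | rewrite ws orbT].
rewrite rhoU; apply: (rle_lub HR); first by apply/Kz/sK; rewrite /lfin mem_head.
by apply: IH => w' sw'; apply: sK; rewrite /lfin in_cons sw' orbT.
Qed.

Definition eta_letter (a : A) : N := eta [:: a].
Definition rho_letter (a : A) : R := rho (lword [:: a]).

Lemma wprod_eta w : wprod mulN oneN eta_letter w = eta w.
Proof. by elim: w => [|a w IH] /=; [rewrite eta_nil | rewrite IH -etaM]. Qed.

Lemma wprod_rho w : wprod mul one rho_letter w = rho (lword w).
Proof.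
by elim: w => [|a w IH] /=; [rewrite rho_nil | rewrite IH /rho_letter -rhoC -lword_cat].
Qed.

Lemma SF_recognized_eta L : SF (recognized mulN oneN eta_letter) L -> SF C L.
Proof.
apply: SF_subclass => K [F KF]; have -> : K = preimage_lang eta F.
  by apply: lang_ext => w; rewrite KF wprod_eta.
exact: C_preimage.
Qed.

Lemma saturated_cover S : SF_saturated mulN eta add mul one omega rho S ->
  forall t, exists Ks, cover_of (SF C) (preimage_lang eta [set t]) Ks /\
    forall r, imprint add rho Ks r -> S t r.
Proof.
case=> Sw Sle SM Som t.
have HS : letter_saturated mulN oneN add mul one omega eta_letter rho_letter S.
  by split=> //; [have := Sw [::]; rewrite eta_nil rho_nil | move=> a; exact: Sw].
have [I [cov [cov_good cov_cover]]] :=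
  good_cover_exists (leqnn _) canonical_monoid HR Hom HS [set: A].
exists (List.map (fun i => elang (cov i)) (List.filter (fun i => emon (cov i) == t) (enum I))).
split; [split|].
- move=> w; rewrite /preimage_lang inE => /eqP wt.
  have [i cov_iw] := cov_cover w (words_over_setT w).
  exists (elang (cov i)); split=> //; apply: List.in_map; apply/List.filter_In.
  split; first by apply: mem_In; rewrite mem_enum.
  by case: (cov_good i) => _ _ /(_ w cov_iw) [<- _]; rewrite wprod_eta wt eqxx.
- move=> K /List.in_map_iff [i [<- _]].
  by case: (cov_good i) => SFi _ _; exact: SF_recognized_eta.
- move=> r [K [/List.in_map_iff [i [<- /List.filter_In [_ /eqP it]]] r_le]].
  case: (cov_good i) => _ Si vali; apply: (Sle _ (erat (cov i))); first by rewrite -it.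
  apply: (rle_trans HR r_le); apply: rho_le_words => w /vali [_].
  by rewrite wprod_rho.
Qed.

Inductive sat_closure : N -> R -> Prop :=
| sat_word w : sat_closure (eta w) (rho (lword w))
| sat_down t r q : sat_closure t r -> rle add q r -> sat_closure t q
| sat_mul s q t r : sat_closure s q -> sat_closure t r -> sat_closure (mulN s t) (mul q r)
| sat_omega e r : mulN e e = e -> sat_closure e r ->
    sat_closure e (add (rpow mul one r omega) (rpow mul one r omega.+1)).

Lemma sat_closure_saturated : SF_saturated mulN eta add mul one omega rho sat_closure.
Proof. by split; [exact: sat_word | exact: sat_down | exact: sat_mul | exact: sat_omega]. Qed.

Lemma sat_closure_least S : SF_saturated mulN eta add mul one omega rho S ->
  forall t r, sat_closure t r -> S t r.
Proof. by case=> Sw Sle SM Som t r; elim=> {t r}; eauto. Qed.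

Definition ef_class k w0 : lang A := ef_eq eta k w0.

(* An SF(C)-cover of eta^-1(t) contains a whole ef_eq k class for k large
   enough, so it pays for every ef_bounded pair. *)
Definition ef_bounded t r :=
  forall k, exists w0, eta w0 = t /\ rle add r (rho (ef_class k w0)).

Lemma lpow_ef_class k u n : lsubset (lpow (ef_class k u) n) (ef_class k (wpow u n)).
Proof.
elim: n => [|n IH] w; first by rewrite /lpow /= /lword => ->; exact: ef_eq_refl.
rewrite /lpow iterS -/(lpow _ n) => -[p [q [-> [up /IH uq]]]].
by rewrite /ef_class wpowS; exact: (ef_eq_cat etaM up uq).
Qed.

Lemma ef_bounded_omega e r : mulN e e = e -> ef_bounded e r ->
  ef_bounded e (add (rpow mul one r omega) (rpow mul one r omega.+1)).
Proof.
move=> ee bnd k; have [u [ue ru]] := bnd k; have [om_gt0 om_idem] := Hom.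
pose n := omega * ef_bound k.
have bn : ef_bound k <= n by rewrite /n leq_pmull.
have n_gt0 : 0 < n := leq_trans (ef_bound_gt0 k) bn.
have uu : mulN (eta u) (eta u) = eta u by rewrite ue.
exists (wpow u n); split; first by rewrite (eta_wpow etaM uu n_gt0).
have r_n : rpow mul one r omega = rpow mul one r n.
  by rewrite /n (rpowM HRm) (rpow_idem HRm (om_idem r) (ef_bound_gt0 k)).
rewrite rpowS r_n -rpowS; apply: (rle_lub HR).
- apply: (rle_trans HR (rle_rpow HR n ru)); rewrite -rho_lpow; apply: rho_mono.
  exact: lpow_ef_class.
- apply: (rle_trans HR (rle_rpow HR n.+1 ru)); rewrite -rho_lpow.
  apply: rho_mono => w /lpow_ef_class.
  exact: (ef_eq_trans (ef_eq_wpow etaM uu bn (leq_trans bn (leqnSn n)))).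
Qed.

Lemma sat_closure_ef_bounded t r : sat_closure t r -> ef_bounded t r.
Proof.
elim=> {t r} [w | t r q _ bnd qr | s q t r _ bnd1 _ bnd2 | e r ee _ bnd] k.
- by exists w; split=> //; apply: rho_mono => w' ->; exact: ef_eq_refl.
- by have [w0 [E rw0]] := bnd k; exists w0; split=> //; exact: (rle_trans HR qr rw0).
- have [w1 [E1 r1]] := bnd1 k; have [w2 [E2 r2]] := bnd2 k.
  exists (w1 ++ w2); split; first by rewrite etaM E1 E2.
  apply: (rle_trans HR (rle_mul HR r1 r2)); rewrite -rhoC; apply: rho_mono.
  by move=> w [p [q' [-> [p1 q2]]]]; exact: (ef_eq_cat etaM p1 q2).
- exact: ef_bounded_omega.
Qed.

Lemma SF_cover_ef_closed (Ks : seq (lang A)) : (forall K, List.In K Ks -> SF C K) ->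
  exists k, forall K, List.In K Ks -> ef_closed eta k K.
Proof.
elim: Ks => [|K Ks IH] SFKs; first by exists 0.
have [k1 c1] := IH (fun K' KK' => SFKs K' (or_intror KK')).
have [k2 c2] := SF_ef_closed etaM C_ef_closed (SFKs K (or_introl erefl)).
exists (maxn k1 k2) => K' [<-|KK']; first exact: ef_closed_le (leq_maxr k1 k2) c2.
exact: ef_closed_le (leq_maxl k1 k2) (c1 K' KK').
Qed.

Lemma ef_bounded_imprint t r Ks : ef_bounded t r ->
  cover_of (SF C) (preimage_lang eta [set t]) Ks -> imprint add rho Ks r.
Proof.
move=> bnd [cover SFKs]; have [k cK] := SF_cover_ef_closed SFKs.
have [w0 [w0t rw0]] := bnd k.
have [|K [KKs Kw0]] := cover w0; first by rewrite /preimage_lang w0t inE.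
exists K; split=> //; apply: (rle_trans HR rw0); apply: rho_mono => w w0w.
exact: cK KKs _ _ w0w Kw0.
Qed.

Lemma opt_imprint_sat_closure t r :
  opt_imprint (SF C) (preimage_lang eta [set t]) add rho r <-> sat_closure t r.
Proof.
have [Ks [cover_Ks Ks_sat]] := saturated_cover sat_closure_saturated t.
split=> [[Ks' [[_ opt] r_Ks']] | sat_r]; first exact: Ks_sat (opt Ks cover_Ks r r_Ks').
exists Ks; split; last exact: ef_bounded_imprint (sat_closure_ef_bounded sat_r) cover_Ks.
split=> // Ks' cover_Ks' r' /Ks_sat /sat_closure_ef_bounded bnd.
exact: ef_bounded_imprint bnd cover_Ks'.
Qed.
End Main.

Unset Implicit Arguments.

Theorem theorem9p3 (A : finType) (C : lang A -> Prop)
    (N : finType) (mulN : N -> N -> N) (oneN : N) (eta : seq A -> N)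
    (R : finType) (add : R -> R -> R) (zero : R) (mul : R -> R -> R) (one : R)
    (rho : lang A -> R) (omega : nat) :
  prevariety C -> finite_class C ->
  canonical_C_morphism C mulN oneN eta ->
  multiplicative_rating add zero mul one rho -> nice rho ->
  is_omega mul one omega ->
  let P := fun (t : N) (r : R) =>
             opt_imprint (SF C) (preimage_lang eta [set t]) add rho r in
  SF_saturated mulN eta add mul one omega rho P /\
  (forall S : N -> R -> Prop, SF_saturated mulN eta add mul one omega rho S ->
     forall t r, P t r -> S t r).
Proof.
move=> _ _ Hcan Hmr Hnice Hom P.
have -> : P = sat_closure mulN eta add mul one rho omega.
  apply: funext => t; apply: funext => r; apply: propext.
  exact: (opt_imprint_sat_closure Hcan Hmr Hnice Hom).
by split; [exact: sat_closure_saturated | exact: sat_closure_least].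
Qed.
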